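(* For every pure state $\ket\Psi\in\mathcal H_A\otimes\mathcal H_B\otimes\mathcal H_C$ (finite-dimensional) and every integer $n\ge2$, $Z_n(A:B:C)_{\ket\Psi}$ is a real number with $|Z_n(A:B:C)_{\ket\Psi}|\le1$, and $Z_n(A:B:C)_{\ket\Psi}$ is invariant under permuting the roles of the subsystems $A,B,C$ (e.g. $Z_n(A:B:C)=Z_n(B:A:C)=Z_n(C:B:A)$).
   Context: For a subsystem $X$ and $\pi\in S_N$, $\pi_X$ permutes the $N$ copies of $\mathcal H_X$ according to $\pi$ and acts trivially otherwise. For integer $n\ge2$, arrange $1,\dots,n^2$ in an $n\times n$ array row by row; $\pi^{(1)}\in S_{n^2}$ is the product of the $n$ cycles $(kn+1,\dots,kn+n)$, $k=0,\dots,n-1$ (cycling each row), and $\pi^{(2)}\in S_{n^2}$ is the product of the $n$ cycles $(j,n+j,\dots,(n-1)n+j)$, $j=1,\dots,n$ (cycling each column). $Z_n(A:B:C)_{\ket\Psi}=\bra\Psi^{\otimes n^2}(\pi^{(1)}_A\otimes\pi^{(2)}_B\otimes\mathrm{id}_C)\ket\Psi^{\otimes n^2}$; $Z_n(B:A:C)$ denotes the same expression with the roles of $A$ and $B$ exchanged, etc. *)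

From mathcomp Require Import all_boot all_order all_fingroup all_algebra.
Set Implicit Arguments. Unset Strict Implicit. Unset Printing Implicit Defensive.
Import Order.TTheory GRing.Theory Num.Theory.
Local Open Scope ring_scope.

(* The N = n^2 copies are indexed by the cells (r, c) of an n x n array:
   cell (r, c) (0-based) carries the label r*n + c + 1. *)
Definition cell (n : nat) := ('I_n * 'I_n)%type.

Definition rowcyc_fun n (x : cell n) : cell n := (x.1, ordS x.2).
Definition rowcyc_inv n (x : cell n) : cell n := (x.1, ord_pred x.2).
Lemma rowcyc_can n : cancel (@rowcyc_fun n) (@rowcyc_inv n).
Proof. by case=> r c; rewrite /rowcyc_fun /rowcyc_inv /= ordSK. Qed.
Definition pi1 n : {perm cell n} := perm (can_inj (@rowcyc_can n)).

Definition colcyc_fun n (x : cell n) : cell n := (ordS x.1, x.2).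
Definition colcyc_inv n (x : cell n) : cell n := (ord_pred x.1, x.2).
Lemma colcyc_can n : cancel (@colcyc_fun n) (@colcyc_inv n).
Proof. by case=> r c; rewrite /colcyc_fun /colcyc_inv /= ordSK. Qed.
Definition pi2 n : {perm cell n} := perm (can_inj (@colcyc_can n)).

(* A vector of H_A (x) H_B (x) H_C, with H_X = C^dX, given by its
   coordinates in the computational basis. *)
Definition tripartite (C : numClosedFieldType) (dA dB dC : nat) :=
  'I_dA -> 'I_dB -> 'I_dC -> C.

Definition is_pure_state (C : numClosedFieldType) dA dB dC
  (Psi : tripartite C dA dB dC) : Prop :=
  \sum_(i < dA) \sum_(j < dB) \sum_(k < dC) `|Psi i j k| ^+ 2 = 1.

(* <Psi|^{(x) N} (pA_A (x) pB_B (x) pC_C) |Psi>^{(x) N}, for copies indexed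
   by a finite type I.  A permutation operator pi_X sends the basis vector
   |x_i>_{i in I} of H_X^{(x) I} to |x_{pi^-1 i}>_{i in I}
   (the content of copy i is moved to copy pi i). *)
Definition Zperm (C : numClosedFieldType) dA dB dC (I : finType)
  (Psi : tripartite C dA dB dC) (pA pB pC : {perm I}) : C :=
  \sum_(a : {ffun I -> 'I_dA}) \sum_(b : {ffun I -> 'I_dB})
   \sum_(c : {ffun I -> 'I_dC})
    (\prod_(i : I) Num.conj (Psi (a ((pA^-1)%g i)) (b ((pB^-1)%g i)) (c ((pC^-1)%g i))))
    * \prod_(i : I) Psi (a i) (b i) (c i).

Definition Zn (C : numClosedFieldType) dA dB dC (n : nat)
  (Psi : tripartite C dA dB dC) : C :=
  Zperm Psi (pi1 n) (pi2 n) 1%g.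

(* Since Psi^{(x) N} is invariant under permuting the N copies, the number
   Zperm Psi pA pB pC is unchanged when the copies are relabelled (all three
   permutations conjugated by a common s) and when pA, pB, pC are multiplied
   on the right by a common r; complex conjugation inverts all three.
   Labelling the copies by (Z/n)^2, pi1, pi2 and 1 are the translations by
   (0,1), (1,0) and 0, and relabelling by an additive bijection f turns the
   translation by t into the translation by f t.  Hence Z only depends on a
   triple of vectors up to a common translation and an additive automorphism,
   and the swap (r,c) |-> (c,r), the negation and two shears relate the
   triple ((0,1),(1,0),0) to its permutations and to its negative (which
   gives realness).  The bound |Z| <= 1 is AM-GM termwise, both resulting
   sums being ||Psi||^(2N) = 1. *)
From mathcomp Require Import all_boot all_order all_fingroup all_algebra.
From mathcomp Require Import ring.
Set Implicit Arguments. Unset Strict Implicit. Unset Printing Implicit Defensive.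
Import Order.TTheory GRing.Theory Num.Theory.
Local Open Scope ring_scope.

Section TripleSums.
Variables (A B D : finType).

Lemma ler_norm_sum3 (R : numDomainType) (F : A -> B -> D -> R) :
  `|\sum_a \sum_b \sum_d F a b d| <= \sum_a \sum_b \sum_d `|F a b d|.
Proof.
apply: (le_trans (ler_norm_sum _ _ _)); apply: ler_sum => a _.
apply: (le_trans (ler_norm_sum _ _ _)); apply: ler_sum => b _.
exact: ler_norm_sum.
Qed.

Lemma big3_mean (R : numFieldType) (F G : A -> B -> D -> R) :
  \sum_a \sum_b \sum_d (F a b d + G a b d) / 2 =
  (\sum_a \sum_b \sum_d F a b d + \sum_a \sum_b \sum_d G a b d) / 2.
Proof.
rewrite -big_split big_distrl; apply: eq_bigr => a _.
rewrite -big_split big_distrl; apply: eq_bigr => b _.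
by rewrite -big_split big_distrl.
Qed.

End TripleSums.

Section PermutationInvariance.
Variables (C : numClosedFieldType) (dA dB dC : nat) (I : finType).
Variable Psi : tripartite C dA dB dC.

Definition precomp (T : finType) (s : {perm I}) (a : {ffun I -> T}) :
  {ffun I -> T} := [ffun i => a (s i)].

Lemma precomp_inj (T : finType) (s : {perm I}) : injective (@precomp T s).
Proof.
move=> a a' /ffunP eq_aa'; apply/ffunP => i.
by have := eq_aa' ((s^-1)%g i); rewrite !ffunE permKV.
Qed.

Lemma sum_precomp3 (R : nmodType) (sA sB sC : {perm I})
    (F : {ffun I -> 'I_dA} -> {ffun I -> 'I_dB} -> {ffun I -> 'I_dC} -> R) :
  \sum_a \sum_b \sum_c F (precomp sA a) (precomp sB b) (precomp sC c) =
  \sum_a \sum_b \sum_c F a b c.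
Proof.
rewrite [RHS](reindex_inj (@precomp_inj _ sA)); apply: eq_bigr => a _.
rewrite [RHS](reindex_inj (@precomp_inj _ sB)); apply: eq_bigr => b _.
by rewrite [RHS](reindex_inj (@precomp_inj _ sC)).
Qed.

Lemma Zperm_conjg (pA pB pC s : {perm I}) :
  Zperm Psi (pA ^ s) (pB ^ s) (pC ^ s) = Zperm Psi pA pB pC.
Proof.
rewrite /Zperm -[in RHS](sum_precomp3 s s s).
apply: eq_bigr => a _; apply: eq_bigr => b _; apply: eq_bigr => c _.
rewrite (reindex_inj (@perm_inj _ s)) [X in _ * X](reindex_inj (@perm_inj _ s)).
by congr (_ * _); apply: eq_bigr => i _; rewrite -?conjVg ?permJ !ffunE.
Qed.

Lemma Zperm_mulr (pA pB pC r : {perm I}) :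
  Zperm Psi (pA * r) (pB * r) (pC * r) = Zperm Psi pA pB pC.
Proof.
rewrite /Zperm; apply: eq_bigr => a _; apply: eq_bigr => b _; apply: eq_bigr => c _.
rewrite (reindex_inj (@perm_inj _ r)); congr (_ * _).
by apply: eq_bigr => i _; rewrite !invMg !permM permK.
Qed.

Lemma conjC_Zperm (pA pB pC : {perm I}) :
  Num.conj (Zperm Psi pA pB pC) = Zperm Psi pA^-1 pB^-1 pC^-1.
Proof.
rewrite /Zperm -(sum_precomp3 pA pB pC) !rmorph_sum.
apply: eq_bigr => a _; rewrite rmorph_sum; apply: eq_bigr => b _.
rewrite rmorph_sum; apply: eq_bigr => c _.
rewrite rmorphM !rmorph_prod mulrC !invgK; congr (_ * _).
  by apply: eq_bigr => i _; rewrite !ffunE.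
by apply: eq_bigr => i _; rewrite /= conjCK !ffunE !permKV.
Qed.

Lemma sum_prod_norm2 : is_pure_state Psi ->
  \sum_(a : {ffun I -> 'I_dA}) \sum_(b : {ffun I -> 'I_dB})
   \sum_(c : {ffun I -> 'I_dC}) \prod_i `|Psi (a i) (b i) (c i)| ^+ 2 = 1.
Proof.
move=> pure; transitivity (\prod_(i : I) \sum_(x < dA) \sum_(y < dB) \sum_(z < dC)
  `|Psi x y z| ^+ 2); last by rewrite big1.
rewrite bigA_distr_bigA; apply: eq_bigr => a _.
rewrite bigA_distr_bigA; apply: eq_bigr => b _.
by rewrite bigA_distr_bigA.
Qed.

Lemma Zperm_norm_le1 (pA pB pC : {perm I}) : is_pure_state Psi ->
  `|Zperm Psi pA pB pC| <= 1.
Proof.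
move=> pure.
pose w (a : {ffun I -> 'I_dA}) (b : {ffun I -> 'I_dB}) (c : {ffun I -> 'I_dC}) :=
  \prod_i `|Psi (a i) (b i) (c i)| ^+ 2.
apply: (le_trans (ler_norm_sum3 _)).
apply: (@le_trans _ _ (\sum_a \sum_b \sum_c
   (w (precomp pA^-1 a) (precomp pB^-1 b) (precomp pC^-1 c) + w a b c) / 2)).
  apply: ler_sum => a _; apply: ler_sum => b _; apply: ler_sum => c _.
  rewrite normrM -rmorph_prod norm_conjC /w.
  under [X in _ <= (X + _) / 2]eq_bigr => i _ do rewrite !ffunE.
  rewrite !prodrXl -!normr_prod.
  by apply: real_leif_mean_square; exact: normr_real.
by rewrite big3_mean sum_precomp3 sum_prod_norm2 // -mulr2n divff ?pnatr_eq0.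
Qed.

End PermutationInvariance.

Section CellTranslations.
Variable m : nat.
Local Notation V := (cell m.+2).

Lemma cell_addE (x y : V) : x + y = (x.1 + y.1, x.2 + y.2).
Proof. by []. Qed.

Definition shift (t : V) : {perm V} := perm (addIr t).

Lemma shiftE (t x : V) : shift t x = x + t.
Proof. by rewrite permE. Qed.

Lemma shift0 : shift 0 = 1%g.
Proof. by apply/permP => x; rewrite shiftE perm1 addr0. Qed.

Lemma shiftM (s t : V) : (shift s * shift t)%g = shift (s + t).
Proof. by apply/permP => x; rewrite permM !shiftE addrA. Qed.

Lemma shiftV (t : V) : (shift t)^-1%g = shift (- t).
Proof.
apply/permP => x; apply: (@perm_inj _ (shift t)).
by rewrite permKV !shiftE subrK.
Qed.

Lemma shift_conjg (f : {perm V}) (t : V) :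
  {morph f : x y / x + y} -> (shift t ^ f)%g = shift (f t).
Proof.
move=> f_add; apply/permP => x.
by rewrite conjgE !permM shiftE f_add permKV shiftE.
Qed.

Definition row_step : V := (0, 1).
Definition col_step : V := (1, 0).

Lemma pi1_shift : pi1 m.+2 = shift row_step.
Proof.
apply/permP => -[r c].
by rewrite shiftE permE /rowcyc_fun cell_addE /= addr0 -(@add_Zp_1 m.+2).
Qed.

Lemma pi2_shift : pi2 m.+2 = shift col_step.
Proof.
apply/permP => -[r c].
by rewrite shiftE permE /colcyc_fun cell_addE /= addr0 -(@add_Zp_1 m.+2).
Qed.

Definition swap_cell (x : V) : V := (x.2, x.1).
Definition shear_row (x : V) : V := (- x.1 - x.2, x.2).
Definition shear_col (x : V) : V := (x.1, - x.1 - x.2).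

Lemma swap_cell_inj : injective swap_cell.
Proof. by apply: (inv_inj (_ : involutive _)) => -[r c]. Qed.

Lemma shear_row_inj : injective shear_row.
Proof.
by apply: (inv_inj (_ : involutive _)) => -[r c]; rewrite /shear_row /=; congr pair; ring.
Qed.

Lemma shear_col_inj : injective shear_col.
Proof.
by apply: (inv_inj (_ : involutive _)) => -[r c]; rewrite /shear_col /=; congr pair; ring.
Qed.

Lemma swap_cellD : {morph swap_cell : x y / x + y}.
Proof. by []. Qed.

Lemma shear_rowD : {morph shear_row : x y / x + y}.
Proof. by move=> x y; congr pair; rewrite /=; ring. Qed.

Lemma shear_colD : {morph shear_col : x y / x + y}.
Proof. by move=> x y; congr pair; rewrite /=; ring. Qed.

Variables (C : numClosedFieldType) (dA dB dC : nat) (Psi : tripartite C dA dB dC).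
Local Notation Zs u v w := (Zperm Psi (shift u) (shift v) (shift w)).

Lemma Zperm_shiftD (t u v w : V) : Zs (u + t) (v + t) (w + t) = Zs u v w.
Proof. by rewrite -!shiftM Zperm_mulr. Qed.

Lemma Zperm_shift_additive (f : V -> V) (f_inj : injective f) :
  {morph f : x y / x + y} -> forall u v w, Zs (f u) (f v) (f w) = Zs u v w.
Proof.
move=> f_add u v w; pose s := perm f_inj.
have s_add : {morph s : x y / x + y} by move=> x y; rewrite !permE.
by rewrite -[in RHS](Zperm_conjg _ _ _ _ s) !shift_conjg // !permE.
Qed.

Lemma conjC_Zperm_shift (u v w : V) : Num.conj (Zs u v w) = Zs (- u) (- v) (- w).
Proof. by rewrite conjC_Zperm !shiftV. Qed.

Lemma Zperm_shift_exchange23 : Zs row_step col_step 0 = Zs row_step 0 col_step.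
Proof.
rewrite -(Zperm_shiftD (- col_step)).
rewrite -[in RHS](Zperm_shift_additive shear_row_inj shear_rowD).
by congr Zperm; congr shift; congr pair; rewrite /=; ring.
Qed.

Lemma Zperm_shift_exchange12 : Zs row_step 0 col_step = Zs 0 row_step col_step.
Proof.
rewrite -(Zperm_shiftD (- row_step)).
rewrite -[in RHS](Zperm_shift_additive shear_col_inj shear_colD).
by congr Zperm; congr shift; congr pair; rewrite /=; ring.
Qed.

End CellTranslations.

Theorem mainTheorem10 (C : numClosedFieldType) (dA dB dC : nat)
  (Psi : tripartite C dA dB dC) (n : nat) :
  is_pure_state Psi -> (2 <= n)%N ->
  [/\ Zn n Psi \is Num.real,
      `|Zn n Psi| <= 1 &
      Zn n Psi = Zperm Psi (pi2 n) (pi1 n) 1%g           (* Z(B:A:C) *)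
   /\ Zn n Psi = Zperm Psi (pi1 n) 1%g (pi2 n)           (* Z(A:C:B) *)
   /\ Zn n Psi = Zperm Psi (pi2 n) 1%g (pi1 n)           (* Z(C:A:B) *)
   /\ Zn n Psi = Zperm Psi 1%g (pi1 n) (pi2 n)           (* Z(B:C:A) *)
   /\ Zn n Psi = Zperm Psi 1%g (pi2 n) (pi1 n)].         (* Z(C:B:A) *)
Proof.
move=> pure; case: n => [|[|m]] // _.
have swap := Zperm_shift_additive Psi (@swap_cell_inj m) (@swap_cellD m).
have neg := Zperm_shift_additive Psi (@oppr_inj (cell m.+2)) (@opprD (cell m.+2)).
rewrite /Zn pi1_shift pi2_shift -(shift0 m); split.
- by rewrite CrealE conjC_Zperm_shift neg.
- exact: Zperm_norm_le1.
split; first by rewrite -swap.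
rewrite Zperm_shift_exchange23; split=> //; split; first by rewrite -swap.
by rewrite Zperm_shift_exchange12; split=> //; rewrite -swap.
Qed.
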